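(* Let $(S,\mathcal C)$ be a connectoid and $N,N'$ necklaces of $(S,\mathcal C)$. Then $N$ and $N'$ are equivalent if and only if there is an infinite family $(C_n)_{n\in\mathbb N}$ of pairwise disjoint finite connected sets such that each $C_n$ contains an element of $N$ and an element of $N'$.
   Context: A connectoid is given by a set $S$ and a set $\mathcal F$ of finite subsets of $S$ such that (i) $F\cup F'\in\mathcal F$ whenever $F,F'\in\mathcal F$ and $F\cap F'\neq\emptyset$, and (ii) $\emptyset\in\mathcal F$ and $\{s\}\in\mathcal F$ for every $s\in S$. A set $C\subseteq S$ is connected if for all $x,y\in C$ there is $F\in\mathcal F$ with $F\subseteq C$ and $x,y\in F$; $\mathcal C$ is the set of connected sets. For $S'\subseteq S$, a component of $S'$ is a maximal connected subset of $S'$, and $\mathcal K(S')$ is the set of components of $S'$. A necklace is a connected set $N$ for which there is a family $(H_n)_{n\in\mathbb N}$ of finite connected sets with $N=\bigcup_n H_n$ and $H_i\cap H_j\neq\emptyset$ iff $|i-j|\le 1$. For a necklace $N$ and finite $X\subseteq S$, the $X$-tail of $N$ is the unique element of $\mathcal K(N\setminus X)$ containing all but finitely many elements of $N$. Two necklaces are equivalent if for every finite $X\subseteq S$ their $X$-tails are contained in the same element of $\mathcal K(S\setminus X)$. *)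

From mathcomp Require Import all_boot.
From mathcomp Require Import boolp classical_sets cardinality.
Set Implicit Arguments. Unset Strict Implicit. Unset Printing Implicit Defensive.
Local Open Scope classical_set_scope.

Record connectoid (S : Type) := Connectoid {
  cF : set (set S);
  cF_finite : forall F, cF F -> finite_set F;
  cF_union : forall F F', cF F -> cF F' -> F `&` F' !=set0 -> cF (F `|` F');
  cF_empty : cF set0;
  cF_single : forall s : S, cF [set s]
}.

Section Defs.
Variables (S : Type) (c : connectoid S).

Definition connected_set (C : set S) : Prop :=
  forall x y, C x -> C y -> exists F, cF c F /\ F `<=` C /\ F x /\ F y.

Definition component (S' K : set S) : Prop :=
  K `<=` S' /\ connected_set K /\
  (forall K', K `<=` K' -> K' `<=` S' -> connected_set K' -> K' = K).

Definition necklace (N : set S) : Prop :=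
  connected_set N /\
  exists H : nat -> set S,
    (forall n, finite_set (H n) /\ connected_set (H n)) /\
    N = \bigcup_n H n /\
    (forall i j : nat, (H i `&` H j !=set0) <-> (i <= j.+1 /\ j <= i.+1)%N).

(* T is an X-tail of N: a component of N \ X containing all but finitely
   many elements of N (the paper shows such T exists and is unique). *)
Definition tail (N X T : set S) : Prop :=
  component (N `\` X) T /\ finite_set (N `\` T).

Definition necklace_equiv (N N' : set S) : Prop :=
  forall X : set S, finite_set X ->
  forall T T', tail N X T -> tail N' X T' ->
  exists K, component (~` X) K /\ T `<=` K /\ T' `<=` K.

End Defs.

From mathcomp Require Import all_boot.
From mathcomp Require Import boolp classical_sets cardinality.
Set Implicit Arguments. Unset Strict Implicit.
Local Open Scope classical_set_scope.

(** Both directions rest on one observation: a point lies in only finitely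
    many members of a pairwise disjoint family, and likewise in only finitely
    many links of a necklace, so every finite set is avoided by all but
    finitely many of them.  Given equivalence, the component of [S \ X]
    holding both X-tails yields a finite connected set joining [N] to [N']
    and avoiding [X]; choosing such sets greedily, each avoiding the union of
    its predecessors, gives the disjoint family.  Conversely, a member of the
    family avoiding [X] and the finitely many points of [N], [N'] outside
    their tails links the two tails inside [S \ X]. *)

Lemma eventually_avoid_finite (T : Type) (C : nat -> set T) (Y : set T) :
  finite_set Y -> (forall y, Y y -> exists m, forall n, (m <= n)%N -> ~ C n y) ->
  exists m, forall n, (m <= n)%N -> C n `&` Y = set0.
Proof.
move=> fY hY.
have /finite_seqP[s sE] : @finite_set {classic T} Y by [].
suff [m hm] : exists m, forall y : {classic T}, y \in s ->
    forall n, (m <= n)%N -> ~ C n y.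
  exists m => n mn; apply/seteqP; split => // y [Cy Yy].
  by apply: (hm y _ n mn Cy); have : [set` s] y by rewrite -sE.
have {hY sE} : forall y : {classic T}, y \in s ->
    exists m, forall n, (m <= n)%N -> ~ C n y.
  by move=> y ys; apply: hY; rewrite sE.
elim: s => [|y s IH] hs; first by exists 0%N.
have [m1 h1] := hs y (mem_head _ _).
have [m2 h2] := IH (fun x xs => hs x (@mem_behead _ (y :: s) x xs)).
exists (maxn m1 m2) => x; rewrite inE => /orP[/eqP-> | xs] n mn.
  by apply: h1; apply: leq_trans mn; apply: leq_maxl.
by apply: h2 => //; apply: leq_trans mn; apply: leq_maxr.
Qed.

Lemma pairwise_disjoint_eventually_notin (T : Type) (C : nat -> set T) x :
  (forall i j, i <> j -> C i `&` C j = set0) ->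
  exists m, forall n, (m <= n)%N -> ~ C n x.
Proof.
move=> hD; have [[i Cix] | nC] := pselect (exists i, C i x); last first.
  by exists 0%N => n _ Cnx; apply: nC; exists n.
exists i.+1 => n lt_in Cnx.
have ne_in : i <> n by move=> e; rewrite e ltnn in lt_in.
by have : (C i `&` C n) x by []; rewrite hD.
Qed.

(* Greedy choice: the n-th set avoids the (finite) union of its predecessors. *)
Lemma avoiding_disjoint_family (T : Type) (P : set T -> Prop) :
  (forall F, P F -> finite_set F) ->
  (forall X, finite_set X -> exists F, P F /\ F `&` X = set0) ->
  exists C : nat -> set T,
    (forall n, P (C n)) /\ (forall i j, i <> j -> C i `&` C j = set0).
Proof.
move=> P_finite hP.
have choice X : exists F, P F /\ (finite_set X -> F `&` X = set0).
  have [fX | nfX] := pselect (finite_set X).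
    by have [F [PF FX]] := hP X fX; exists F.
  by have [F [PF _]] := hP set0 (finite_set0 _); exists F.
pose g X := proj1_sig (cid (choice X)).
have hg X : P (g X) /\ (finite_set X -> g X `&` X = set0).
  exact: (proj2_sig (cid (choice X))).
pose fix before n := if n is k.+1 then before k `|` g (before k) else set0.
have before_finite n : finite_set (before n).
  elim: n => [|n IH] /=; first exact: finite_set0.
  by rewrite finite_setU; split => //; apply: P_finite; case: (hg (before n)).
have before_grows i k : g (before i) `<=` before (i + k.+1).
  elim: k => [|k IH] w gw; first by rewrite addn1; right.
  by rewrite addnS; left; apply: IH.
have disj i j : (i < j)%N -> g (before i) `&` g (before j) = set0.
  move=> lt_ij; apply/seteqP; split => // w [gi gj].
  have [_ avoid] := hg (before j).
  have : (g (before j) `&` before j) w.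
    by split => //; rewrite -(subnKC lt_ij) addSnnS; apply: before_grows.
  by rewrite avoid.
exists (fun n => g (before n)); split; first by move=> n; case: (hg (before n)).
move=> i j ne_ij; case: (ltngtP i j) => [lt_ij | lt_ji | e]; first exact: disj.
- by rewrite setIC; exact: disj.
- by case: ne_ij.
Qed.

Section Connectoid.
Variables (S : Type) (c : connectoid S).

Lemma cF_connected F : cF c F -> connected_set c F.
Proof. by move=> cFF x y Fx Fy; exists F; do !split. Qed.

Lemma connected_star (C : set S) z :
  (forall x, C x -> exists F, [/\ cF c F, F `<=` C, F x & F z]) ->
  connected_set c C.
Proof.
move=> h x y Cx Cy.
have [F1 [cF1 F1C F1x F1z]] := h x Cx.
have [F2 [cF2 F2C F2y F2z]] := h y Cy.
exists (F1 `|` F2); split; first by apply: cF_union => //; exists z.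
by split; [move=> w [/F1C | /F2C] | split; [left | right]].
Qed.

Lemma connected_setU (C1 C2 : set S) z :
  connected_set c C1 -> connected_set c C2 -> C1 z -> C2 z ->
  connected_set c (C1 `|` C2).
Proof.
move=> h1 h2 z1 z2; apply: (@connected_star _ z) => x [xC | xC].
  have [F [cFF [FC [Fx Fz]]]] := h1 x z xC z1.
  by exists F; split => // w /FC; left.
have [F [cFF [FC [Fx Fz]]]] := h2 x z xC z2.
by exists F; split => // w /FC; right.
Qed.

Definition component_of (S' : set S) x : set S :=
  fun y => exists C, [/\ connected_set c C, C `<=` S', C x & C y].

Lemma sub_component_of (S' C : set S) x :
  connected_set c C -> C `<=` S' -> C x -> C `<=` component_of S' x.
Proof. by move=> cC CS Cx y Cy; exists C. Qed.

Lemma component_of_component (S' : set S) x :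
  S' x -> component c S' (component_of S' x).
Proof.
move=> S'x.
have cK : connected_set c (component_of S' x).
  apply: (@connected_star _ x) => y [C [cC CS Cx Cy]].
  have [F [cFF [FC [Fy Fx]]]] := cC y x Cy Cx.
  by exists F; split => // w /FC Cw; exists C.
split; first by move=> y [C [_ CS _ /CS]].
split => // K' sub K'S cK'; apply/seteqP; split => // y K'y.
have Kx : component_of S' x x.
  exists [set x]; split => //; last by move=> w ->.
  by move=> a b -> ->; exists [set x]; do !split => //; exact: cF_single.
by exists K'; split => //; apply: sub.
Qed.

Section Necklace.
Variables (N : set S) (H : nat -> set S).
Hypotheses (H_connected : forall n, connected_set c (H n))
  (H_finite : forall n, finite_set (H n)) (N_def : N = \bigcup_n H n)
  (H_meet : forall i j, (H i `&` H j !=set0) <-> (i <= j.+1 /\ j <= i.+1)%N).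

Lemma link_nonempty n : H n !=set0.
Proof. by have [_ /(_ (conj (leqnSn n) (leqnSn n)))[x [Hx _]]] := H_meet n n; exists x. Qed.

Lemma link_eventually_notin x : exists m, forall n, (m <= n)%N -> ~ H n x.
Proof.
have [[i Hix] | nH] := pselect (exists i, H i x); last first.
  by exists 0%N => n _ Hnx; apply: nH; exists n.
exists i.+2 => n lt_in Hnx.
have [/(_ (ex_intro _ x (conj Hix Hnx))) [_]] := H_meet i n.
by rewrite leqNgt lt_in.
Qed.

Definition necklace_end a := \bigcup_(n in [set n | (a <= n)%N]) H n.

Lemma necklace_end_path a x k y : H a x -> H (a + k) y ->
  exists F, [/\ cF c F, F `<=` necklace_end a, F x & F y].
Proof.
move=> Hax; elim: k y => [|k IH] y.
  rewrite addn0 => Hay; have [F [cFF [FH [Fx Fy]]]] := H_connected Hax Hay.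
  by exists F; split => // w /FH; exists a => /=.
move=> Hy; rewrite addnS in Hy.
have [z [Hz1 Hz2]] : H (a + k) `&` H (a + k).+1 !=set0.
  by apply/H_meet; split => //; apply: leqW.
have [F1 [cF1 F1U F1x F1z]] := IH z Hz1.
have [F2 [cF2 [F2H [F2z F2y]]]] := H_connected Hz2 Hy.
exists (F1 `|` F2); split; [by apply: cF_union => //; exists z | | by left | by right].
by move=> w [/F1U // | /F2H Hw]; exists (a + k).+1 => //=; apply/leqW/leq_addr.
Qed.

Lemma necklace_end_connected a : connected_set c (necklace_end a).
Proof.
have [z Hz] := @link_nonempty a.
apply: (@connected_star _ z) => y [n /= le_an Hy].
have Hy' : H (a + (n - a)) y by rewrite subnKC.
by have [F [cFF Fend Fz Fy]] := necklace_end_path Hz Hy'; exists F.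
Qed.

(* The tail is the component of [N \ X] containing [necklace_end m], where
   [H m], [H m.+1], ... all avoid [X]. *)
Lemma necklace_tail_exists (X : set S) : finite_set X ->
  exists T, tail c N X T /\ T !=set0.
Proof.
move=> fX; have [m hm] := eventually_avoid_finite fX (fun x _ => @link_eventually_notin x).
have [z Hz] := @link_nonempty m.
have endNX : necklace_end m `<=` N `\` X.
  move=> y [n /= le_mn Hy]; rewrite N_def; split; first by exists n.
  by move=> Xy; have : (H n `&` X) y by []; rewrite hm.
have endz : necklace_end m z by exists m => /=.
have endT := sub_component_of (@necklace_end_connected m) endNX endz.
exists (component_of (N `\` X) z); split; last by exists z; apply: endT.
split; first by apply: component_of_component; apply: endNX.
apply: (@sub_finite_set _ _ (\bigcup_(n in `I_m) H n)); last first.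
  by apply: bigcup_finite => // i _.
move=> y [Ny nTy]; move: Ny; rewrite N_def => -[n _ Hy].
case: (ltnP n m) => [lt_nm | le_mn]; first by exists n.
by case: nTy; apply: endT; exists n.
Qed.

End Necklace.

Lemma necklace_tail N X : necklace c N -> finite_set X ->
  exists T, tail c N X T /\ T !=set0.
Proof.
move=> [_ [H [hH [N_def H_meet]]]].
by apply: (necklace_tail_exists (fun n => (hH n).2) (fun n => (hH n).1) N_def H_meet).
Qed.

Definition connector (N N' F : set S) :=
  [/\ finite_set F, connected_set c F, F `&` N !=set0 & F `&` N' !=set0].

Lemma necklace_equiv_connector N N' X :
  necklace c N -> necklace c N' -> necklace_equiv c N N' -> finite_set X ->
  exists F, connector N N' F /\ F `&` X = set0.
Proof.
move=> nN nN' heq fX.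
have [T [tT [z Tz]]] := necklace_tail nN fX.
have [T' [tT' [z' Tz']]] := necklace_tail nN' fX.
have [[TNX _] _] := tT; have [[T'NX _] _] := tT'.
have [K [[KX [cK _]] [TK T'K]]] := heq X fX T T' tT tT'.
have [F [cFF [FK [Fz Fz']]]] := cK z z' (TK z Tz) (T'K z' Tz').
exists F; split.
  split; [exact: cF_finite cFF | exact: cF_connected cFF | |].
    by exists z; split => //; case: (TNX z Tz).
  by exists z'; split => //; case: (T'NX z' Tz').
by apply/seteqP; split => // w [/FK/KX].
Qed.

Lemma connector_family_equiv N N' (C : nat -> set S) :
  (forall n, connector N N' (C n)) ->
  (forall i j, i <> j -> C i `&` C j = set0) -> necklace_equiv c N N'.
Proof.
move=> hC hD X fX T T' [[TNX [cT _]] fNT] [[T'NX [cT' _]] fN'T'].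
pose Y := X `|` (N `\` T) `|` (N' `\` T').
have fY : finite_set Y by rewrite !finite_setU.
have [m /(_ m (leqnn m)) CmY] := eventually_avoid_finite fY
  (fun y _ => pairwise_disjoint_eventually_notin y hD).
have notY w : C m w -> ~ Y w.
  by move=> Cw Yw; have : (C m `&` Y) w by []; rewrite CmY.
have [_ cCm [t [Cmt Nt]] [t' [Cmt' N't']]] := hC m.
have CmX : C m `<=` ~` X by move=> w Cw Xw; apply: (notY w Cw); left; left.
have Tt : T t by apply: contrapT => nTt; apply: (notY t Cmt); left; right.
have T't' : T' t' by apply: contrapT => nTt'; apply: (notY t' Cmt'); right.
have TX : T `<=` ~` X by move=> w /TNX [].
have T'X : T' `<=` ~` X by move=> w /T'NX [].
exists (component_of (~` X) t); split; first exact: component_of_component (CmX t Cmt).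
split; first exact: sub_component_of cT TX Tt.
have cT'C : connected_set c (T' `|` C m) by exact: connected_setU cT' cCm T't' Cmt'.
have T'CX : T' `|` C m `<=` ~` X by move=> w [/T'X | /CmX].
by move=> w T'w; apply: (sub_component_of cT'C T'CX (or_intror Cmt)); left.
Qed.

End Connectoid.

Theorem proposition2p1 (S : Type) (c : connectoid S) (N N' : set S) :
  necklace c N -> necklace c N' ->
  (necklace_equiv c N N' <->
   exists C : nat -> set S,
     (forall n, finite_set (C n) /\ connected_set c (C n) /\
                (C n `&` N !=set0) /\ (C n `&` N' !=set0)) /\
     (forall i j : nat, i <> j -> C i `&` C j = set0)).
Proof.
move=> nN nN'; split.
- move=> heq.
  have connector_finite F : connector c N N' F -> finite_set F by case.
  have [C [hC hD]] := avoiding_disjoint_family connector_finite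
    (fun X fX => necklace_equiv_connector nN nN' heq fX).
  by exists C; split => // n; have [] := hC n.
- move=> [C [hC hD]]; apply: (connector_family_equiv (C := C)) => // n.
  by have [? [? []]] := hC n.
Qed.
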